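(* Let $D_\infty=\langle s,t\mid t^2,\ tsts\rangle$. If $\alpha:D_\infty\curvearrowright X$ is a minimal continuous action on an infinite compact Hausdorff space $X$, then $\alpha$ is topologically free, i.e. for every $g\ne e$ in $D_\infty$ the set $\{x\in X: gx\ne x\}$ is dense in $X$. *)

From HB Require Import structures.
From mathcomp Require Import all_boot all_order all_algebra.
From mathcomp Require Import all_classical all_reals all_analysis.
Set Implicit Arguments. Unset Strict Implicit. Unset Printing Implicit Defensive.
Import Order.TTheory GRing.Theory Num.Theory.

(* The infinite dihedral group D_oo = < s, t | t^2, tsts >, modelled by its
   normal form: the pair (n, b) stands for s^n t^b  (n : int, b : bool).
   From t^2 = 1 and tsts = 1 we get t s^m = s^-m t, hence
   (s^n t^b)(s^m t^c) = s^(n + (-1)^b m) t^(b xor c). *)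
Definition Dinf := (int * bool)%type.

Definition dinf_one : Dinf := (0%R, false).
Definition dinf_mul (g h : Dinf) : Dinf :=
  ((g.1 + (if g.2 then - h.1 else h.1))%R, xorb g.2 h.2).
Definition dinf_s : Dinf := (1%R, false).
Definition dinf_t : Dinf := (0%R, true).

Local Open Scope classical_set_scope.

Definition continuous_dinf_action (X : topologicalType) (act : Dinf -> X -> X) :=
  [/\ (forall x, act dinf_one x = x),
      (forall g h x, act (dinf_mul g h) x = act g (act h x)) &
      (forall g, continuous (act g))].

Definition minimal_action (X : topologicalType) (act : Dinf -> X -> X) :=
  forall x : X, closure (range (fun g => act g x)) = setT.

Definition topologically_free (X : topologicalType) (act : Dinf -> X -> X) :=
  forall g : Dinf, g <> dinf_one -> dense [set x | act g x <> x].

From HB Require Import structures.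
From mathcomp Require Import all_boot all_order all_algebra.
From mathcomp Require Import all_classical all_reals all_analysis.
From mathcomp Require Import zify.
Set Implicit Arguments.
Unset Strict Implicit.
Unset Printing Implicit Defensive.
Local Open Scope classical_set_scope.
Import Order.TTheory GRing.Theory Num.Theory.

(* Elements of D_oo are translations s^n = (n, false) and reflections
   s^n t = (n, true).  Suppose g <> e fixes a nonempty open set O pointwise.
   1. Compactness, minimality and infiniteness rule out isolated points, so O
      contains two points x and h x with h x <> x (minimality again).
   2. If a translation s^n, n <> 0, fixes a point, then it fixes every point:
      its fixed set is closed (Hausdorff), nonempty and invariant (s^n is
      normalised by D_oo up to inversion), hence everything by minimality.
      Then every orbit lies in the finite set {s^p t^b x | 0 <= p < |n|},
      and the dense orbit forces X to be finite.
   3. Since g fixes x and h x, the element g h^-1 g h fixes x.  If g is a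
      translation we apply 2 to g directly; if g is a reflection,
      g h^-1 g h is a translation, which is trivial only when h = e or
      h = g, both excluded by h x <> x; so 2 applies again.
   In every case X is finite, a contradiction. *)

Definition dinf_inv (h : Dinf) : Dinf := if h.2 then h else ((- h.1)%R, false).

Lemma dinf_mulVg h : dinf_mul (dinf_inv h) h = dinf_one.
Proof. by case: h => m [] /=; rewrite /dinf_mul /dinf_one /= ?addNr ?subrr. Qed.

Lemma dinf_translation_conj n h :
  dinf_mul (n, false) h = dinf_mul h ((if h.2 then (- n)%R else n), false).
Proof. by case: h => m [] /=; rewrite /dinf_mul /= ?opprK addrC. Qed.

Lemma dinf_reflection_commutator n h : exists k : int,
  dinf_mul (n, true) (dinf_mul (dinf_inv h) (dinf_mul (n, true) h)) = (k, false)
  /\ (k = 0%R -> h = dinf_one \/ h = (n, true)).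
Proof.
case: h => m [].
- exists (n - (m - (n - m)))%R; split => // k0; right.
  by congr (_, _); move: k0; lia.
- exists (n - (- m + (n - m)))%R; split => // k0; left.
  by rewrite /dinf_one; congr (_, _); move: k0; lia.
Qed.

Lemma closed_fixed_set (X : topologicalType) (f : X -> X) :
  hausdorff_space X -> continuous f -> closed [set x | f x = x].
Proof.
move=> hX fcont y clFy; apply: hX => A B nA nB.
have nfA : nbhs y (f @^-1` A) by apply: fcont.
have [z [fz [Afz Bz]]] := clFy _ (filterI nfA nB).
by exists z; split => //; rewrite -fz.
Qed.

Lemma compact_discrete_finite (X : topologicalType) :
  compact [set: X] -> (forall x : X, open [set x]) -> finite_set [set: X].
Proof.
move=> cX op1; have [[x0 _]|X0] := pselect ([set: X] !=set0); last first.
  rewrite (_ : [set: X] = set0) //.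
  by apply/seteqP; split => // x _; apply: X0; exists x.
(* the cover characterisation of compactness is stated for pointed spaces *)
pose pX := HB.pack_for ptopologicalType X (isPointed.Build X x0).
have cover_cX : @cover_compact pX [set: X] by rewrite -compact_cover.
have [D _ cov] := cover_cX X [set: X] (fun z => [set z]) (fun z _ => op1 z)
  (fun z _ => ex_intro2 _ _ z I erefl).
apply: (finite_subfset D) => z _.
by have [w /= Dw ->] := cov z I.
Qed.

Section DinfAction.
Variables (X : topologicalType) (act : Dinf -> X -> X).
Hypothesis act_cont_action : continuous_dinf_action act.

Lemma act_one x : act dinf_one x = x.
Proof. by case: act_cont_action. Qed.

Lemma act_mul g h x : act (dinf_mul g h) x = act g (act h x).
Proof. by case: act_cont_action. Qed.

Lemma act_cont g : continuous (act g).
Proof. by case: act_cont_action. Qed.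

Lemma act_invK h x : act (dinf_inv h) (act h x) = x.
Proof. by rewrite -act_mul dinf_mulVg act_one. Qed.

Lemma translation_fixN n y : act (n, false) y = y -> act ((- n)%R, false) y = y.
Proof.
move=> fy; rewrite -{1}fy -act_mul.
rewrite (_ : dinf_mul _ _ = dinf_one) ?act_one //.
by rewrite /dinf_mul /dinf_one /= addNr.
Qed.

Lemma translation_fix_invariant n x h :
  act (n, false) x = x -> act (n, false) (act h x) = act h x.
Proof.
move=> fx; rewrite -act_mul dinf_translation_conj act_mul; congr (act _ _).
by case: h.2 => //; apply: translation_fixN.
Qed.

Lemma translation_fix_multiple n : (forall y, act (n, false) y = y) ->
  forall (q : int) y, act ((q * n)%R, false) y = y.
Proof.
suff fix_nat m : (forall y, act (m, false) y = y) ->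
    forall (k : nat) y, act ((Posz k * m)%R, false) y = y.
  move=> fixn [k|k] y; first exact: fix_nat.
  by rewrite NegzE mulNr -mulrN; apply: fix_nat => z; apply: translation_fixN.
move=> fixm; elim=> [|k IH] y; first by rewrite mul0r act_one.
rewrite intS mulrDl mul1r.
by rewrite (act_mul (m, false) ((Posz k * m)%R, false)) IH fixm.
Qed.

Hypothesis act_minimal : minimal_action act.

Lemma minimal_closed_invariant (C : set X) x : closed C ->
  (forall h y, C y -> C (act h y)) -> C x -> C = setT.
Proof.
move=> clC invC Cx; apply/seteqP; split => // y _.
have orbitC : range (act^~ x) `<=` C by move=> _ [h _ <-]; apply: invC.
have : closure (range (act^~ x)) y by rewrite act_minimal.
by move/(closureS orbitC); rewrite -(closure_id C).1.
Qed.

Hypothesis X_hausdorff : hausdorff_space X.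

Lemma translation_fixed_point_finite n x : n != 0%R ->
  act (n, false) x = x -> finite_set [set: X].
Proof.
move=> n0 fx.
have fix_all y : act (n, false) y = y.
  suff fixT : [set z | act (n, false) z = z] = setT
    by have : [set z | act (n, false) z = z] y by rewrite fixT.
  apply: (minimal_closed_invariant (x := x)) => //.
    exact: (closed_fixed_set X_hausdorff (@act_cont (n, false))).
  by move=> h z; apply: translation_fix_invariant.
(* s^m t^b x = s^(m mod n) t^b x, so the orbit of x lies in S *)
set S := [set act (Posz p.1, p.2) x | p in `I_(absz n) `*` [set: bool]].
have finS : finite_set S.
  by apply/finite_image/finite_setX; [exact: finite_II | exact: finite_finset].
have clS : closed S.
  exact: (accessible_finite_set_closed.1 (hausdorff_accessible X_hausdorff)).
have orbitS : range (act^~ x) `<=` S.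
  move=> _ [[m b] _ <-]; have r0 := modz_ge0 m n0; have rn := ltz_mod m n0.
  exists (absz (m %% n)%Z, b).
    by split => //=; move: rn; rewrite -[X in (X < _)%R]gez0_abs //; lia.
  rewrite /= gez0_abs //.
  rewrite [in RHS](_ : (m, b) =
      dinf_mul (((m %/ n)%Z * n)%R, false) ((m %% n)%Z, b)).
    by rewrite act_mul translation_fix_multiple.
  by rewrite /dinf_mul /= -divz_eq.
apply: (sub_finite_set _ finS) => y _.
have : closure (range (act^~ x)) y by rewrite act_minimal.
by move/(closureS orbitS); rewrite -(closure_id S).1.
Qed.

Lemma two_fixed_points_finite g h x : g <> dinf_one -> act h x <> x ->
  act g x = x -> act g (act h x) = act h x -> finite_set [set: X].
Proof.
move=> g1 hx gx ghx.
(* g h^-1 g h x = g h^-1 h x = x *)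
have fix_comm : act (dinf_mul g (dinf_mul (dinf_inv h) (dinf_mul g h))) x = x.
  by rewrite !act_mul ghx act_invK gx.
case: g g1 gx ghx fix_comm => n [] g1 gx ghx fix_comm; last first.
  apply: (translation_fixed_point_finite _ gx).
  by apply: contra_not_neq g1 => ->.
have [k [comm_k k0]] := dinf_reflection_commutator n h.
rewrite comm_k in fix_comm; apply: (translation_fixed_point_finite _ fix_comm).
by apply/eqP => /k0 [] h_eq; apply: hx; rewrite h_eq ?act_one.
Qed.

Hypothesis X_compact : compact [set: X].

(* Isolated points are impossible unless X is finite: minimality propagates
   the isolation of one point to all points. *)
Lemma open_singleton_finite (x : X) : open [set x] -> finite_set [set: X].
Proof.
move=> ox; apply: compact_discrete_finite => // z.
have [_ [[h _ <-] /= hzx]] : range (act^~ z) `&` [set x] !=set0.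
  have : closure (range (act^~ z)) x by rewrite act_minimal.
  by apply; apply: open_nbhs_nbhs.
have -> : [set z] = act h @^-1` [set x].
  apply/seteqP; split => w /=; first by move=> ->.
  by rewrite -hzx => /(congr1 (act (dinf_inv h))); rewrite !act_invK.
by move/continuousP: (@act_cont h); apply.
Qed.

Lemma open_orbit_point (O : set X) x : ~ finite_set [set: X] ->
  open O -> O x -> exists h, O (act h x) /\ act h x <> x.
Proof.
move=> X_infinite oO Ox.
have [y [Oy yx]] : exists y, O y /\ y <> x.
  apply: contrapT => noy; apply/X_infinite/(@open_singleton_finite x).
  suff -> : [set x] = O by [].
  apply/seteqP; split => [z -> //|z Oz].
  by apply: contrapT => zx; apply: noy; exists z.
have nOy : nbhs y (O `&` ~` [set x]).
  apply: open_nbhs_nbhs; split => //; apply: openI => //.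
  exact/closed_openC/accessible_closed_set1/hausdorff_accessible.
have : closure (range (act^~ x)) y by rewrite act_minimal.
by move=> /(_ _ nOy) [_ [[h _ <-] [Ohx hx]]]; exists h.
Qed.

End DinfAction.

Theorem proposition2p6 (X : topologicalType) (act : Dinf -> X -> X) :
  compact [set: X] -> hausdorff_space X -> ~ finite_set [set: X] ->
  continuous_dinf_action act -> minimal_action act ->
  topologically_free act.
Proof.
move=> X_compact X_hausdorff X_infinite act_action act_minimal g g1 O [x Ox] oO.
apply: contrapT => O_fixed.
have fixO y : O y -> act g y = y.
  by move=> Oy; apply: contrapT => gy; apply: O_fixed; exists y.
have [h [Ohx hx]] := open_orbit_point act_action act_minimal X_hausdorff
  X_compact X_infinite oO Ox.
apply: X_infinite; apply: (two_fixed_points_finite act_action act_minimal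
  X_hausdorff g1 hx); exact: fixO.
Qed.
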